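(* Let $m, n, T$ be positive integers. For each $t \in \{1,\dots,T\}$ let $\mathcal{X}_t = \{ S_t \mid S_t \subseteq [0,1]^m,\ |S_t| = n \}$, and let $\mathcal{X} = \mathcal{X}_1 \times \mathcal{X}_2 \times \cdots \times \mathcal{X}_T$ be the set of point cloud sequences $S = (S_1, \dots, S_T)$ of length $T$. Equip $\mathcal{X}$ with the distance $d_{seq}(S, S') = \max_{t} d_H(S_t, S'_t)$, where $d_H$ is the Hausdorff distance between finite subsets of $[0,1]^m$ (with respect to the Euclidean distance). Suppose $f : \mathcal{X} \to \mathbb{R}$ is continuous with respect to $d_{seq}$, i.e. for every $\epsilon>0$ there is $\delta>0$ such that for all $S, S' \in \mathcal{X}$ with $d_{seq}(S,S') < \delta$ we have $|f(S) - f(S')| < \epsilon$. Then for every $\epsilon > 0$ there exist a positive integer $K$, a function $\zeta : [0,1]^m \times \{1,\dots,T\} \to \mathbb{R}^K$ that is continuous in its first argument, and a continuous function $\gamma : \mathbb{R}^K \to \mathbb{R}$ such that for every $S = (S_1,\dots,S_T) \in \mathcal{X}$, $$\left| f(S) - \gamma\Big( \underset{\mathbf{x} \in S_t,\ t \in \{1,\dots,T\}}{MAX} \{ \zeta(\mathbf{x}, t) \} \Big) \right| < \epsilon,$$ where $MAX$ denotes the element-wise (coordinate-wise) maximum of a finite set of vectors in $\mathbb{R}^K$.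
   Context: The Hausdorff distance between finite sets $A, B \subseteq [0,1]^m$ is $d_H(A,B) = \max\{\sup_{a\in A}\inf_{b\in B}\|a-b\|, \sup_{b\in B}\inf_{a\in A}\|a-b\|\}$. The maximum in the displayed formula is taken over all pairs $(\mathbf{x}, t)$ with $t \in \{1,\dots,T\}$ and $\mathbf{x}$ a point of the $t$-th frame $S_t$. *)

From HB Require Import structures.
From mathcomp Require Import all_boot all_order all_algebra.
From mathcomp Require Import finmap.
From mathcomp Require Import all_classical all_reals all_analysis.
Set Implicit Arguments. Unset Strict Implicit. Unset Printing Implicit Defensive.
Import Order.TTheory GRing.Theory Num.Theory.
Import numFieldTopology.Exports numFieldNormedType.Exports.
Local Open Scope classical_set_scope.
Local Open Scope ring_scope.
Local Open Scope fset_scope.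

Definition cube (R : realType) (m : nat) : set 'rV[R]_m :=
  [set x | forall i : 'I_m, 0 <= x ord0 i <= 1].

Definition edist (R : realType) (m : nat) (x y : 'rV[R]_m) : R :=
  Num.sqrt (\sum_(i < m) (x ord0 i - y ord0 i) ^+ 2).

Definition hausdorff (R : realType) (m : nat) (A B : {fset 'rV[R]_m}) : R :=
  Num.max
    (sup [set inf [set edist a b | b in [set b | b \in B]] | a in [set a | a \in A]])
    (sup [set inf [set edist a b | a in [set a | a \in A]] | b in [set b | b \in B]]).

Definition pc_seq (R : realType) (m n T : nat) (S : 'I_T -> {fset 'rV[R]_m}) : Prop :=
  forall t : 'I_T, #|` S t| = n /\ forall x, x \in S t -> @cube R m x.

Definition dseq (R : realType) (m T : nat) (S S' : 'I_T -> {fset 'rV[R]_m}) : R :=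
  \big[Num.max/0]_(t < T) hausdorff (S t) (S' t).

Definition MAX (R : realType) (m T K : nat) (zeta : 'rV[R]_m -> 'I_T -> 'rV[R]_K)
  (S : 'I_T -> {fset 'rV[R]_m}) : 'rV[R]_K :=
  \row_(k < K) sup [set r : R | exists (t : 'I_T) (x : 'rV[R]_m), x \in S t /\ r = zeta x t ord0 k].

From Pilot Require Import Defs.
From HB Require Import structures.
From mathcomp Require Import all_boot all_order all_algebra.
From mathcomp Require Import finmap.
From mathcomp Require Import all_classical all_reals all_analysis.
From mathcomp Require Import lra.
Import Order.TTheory GRing.Theory Num.Theory.
Import numFieldTopology.Exports numFieldNormedType.Exports.
Local Open Scope classical_set_scope.
Local Open Scope ring_scope.
Set Implicit Arguments. Unset Strict Implicit.

(* Round the points of [0,1]^m to a grid of mesh 1/N in the sup norm.  The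
   feature of a point x of frame t has one coordinate for each frame t' and grid
   point c: -|x - c| if t' = t, and otherwise -2, which is below every in-frame
   value on the cube.  So the coordinatewise MAX over S lists, for every frame
   and grid point, minus the distance from the grid point to the frame;
   sequences whose MAX vectors are 1/N-close have 3/N-close frames, hence are
   d_seq-close (the Euclidean distance is at most m times the sup distance).
   Also f is bounded: it oscillates by less than 1 among sequences with the same
   rounded frames, and there are finitely many of those.  A bounded f that is
   uniformly continuous along a feature map v factors approximately through v
   via the McShane inf-convolution gamma w = inf_S (f S + L |w - v S|), which is
   L-Lipschitz. *)

Section PointCloudApproximation.
Variable R : realType.

Lemma lipschitz_continuous (V W : normedModType R) (g : V -> W) (C : R) :
  (forall x y, `|g x - g y| <= C * `|x - y|) -> continuous g.
Proof.
move=> g_lip x; apply/cvgrPdist_lt => e e0.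
have C1 : 0 < `|C| + 1 by rewrite ltr_wpDl.
near=> y; apply: le_lt_trans (g_lip x y) _.
apply: (@le_lt_trans _ _ ((`|C| + 1) * `|x - y|)).
  by rewrite ler_wpM2r // (le_trans (ler_norm C)) // lerDl.
rewrite -ltr_pdivlMl // mulrC; near: y.
by apply/nbhs_normP; exists (e / (`|C| + 1)) => /=; rewrite ?divr_gt0.
Unshelve. all: by end_near. Qed.

Lemma exists_nat_inv_lt (c d : R) : 0 < d ->
  exists2 N : nat, (0 < N)%N & c * N%:R^-1 < d.
Proof.
move=> d_gt0; exists (Num.truncn (c / d)).+1 => //.
by rewrite ltr_pdivrMr ?ltr0n // mulrC -ltr_pdivrMr // truncnS_gt.
Qed.

Lemma bounded_of_finite_fibers (X : Type) (I : finType) (P : set X)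
    (c : X -> I) (f : X -> R) :
  (forall p q, P p -> P q -> c p = c q -> `|f p - f q| <= 1) ->
  exists B, forall p, P p -> `|f p| <= B.
Proof.
move=> f_fiber.
have fiber_bound i : exists u : R, forall p, P p -> c p = i -> `|f p| <= u.
  have [[p0 [Pp0 <-]]|no_p] := pselect (exists p0, P p0 /\ c p0 = i); last first.
    by exists 0 => p Pp cp; case: no_p; exists p.
  exists (`|f p0| + 1) => p Pp cp.
  rewrite -(subrK (f p0) (f p)) (le_trans (ler_normD _ _)) // addrC lerD2l.
  exact: f_fiber.
have [u u_bound] := fin_all_exists fiber_bound.
exists (\big[Num.max/0]_i u i) => p Pp.
by rewrite (le_trans (u_bound _ p Pp erefl)) // (le_bigmax _ u).
Qed.

Section McShaneExtension.
Variables (V : normedModType R) (X : Type) (P : set X) (v : X -> V) (f : X -> R).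
Variables (B h : R) (p0 : X).
Hypotheses (h_gt0 : 0 < h) (Pp0 : P p0) (f_bounded : forall p, P p -> `|f p| <= B).

(* [L * h = 2 * B] bounds every oscillation of [f], so only points with
   [h]-close features constrain each other. *)
Let L := 2 * B / h.

Let B_ge0 : 0 <= B. Proof. exact: le_trans (f_bounded Pp0). Qed.

Let L_ge0 : 0 <= L. Proof. by rewrite divr_ge0 ?mulr_ge0 // ltW. Qed.

Definition mcshane (w : V) : R := inf [set f p + L * `|w - v p| | p in P].

Let mcshane_set_lbound w : has_lbound [set f p + L * `|w - v p| | p in P].
Proof.
exists (- B); move=> _ [p Pp <-].
have := f_bounded Pp; rewrite ler_norml => /andP[fp_ge _].
by rewrite (le_trans fp_ge) // lerDl mulr_ge0.
Qed.

Lemma mcshane_le w p : P p -> mcshane w <= f p + L * `|w - v p|.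
Proof. by move=> Pp; apply: ge_inf; [exact: mcshane_set_lbound | exists p]. Qed.

Lemma le_mcshane w y :
  (forall p, P p -> y <= f p + L * `|w - v p|) -> y <= mcshane w.
Proof.
move=> y_le; apply: lb_le_inf; first by exists (f p0 + L * `|w - v p0|), p0.
by move=> _ [p Pp <-]; exact: y_le.
Qed.

Lemma mcshane_lipschitz w w' : `|mcshane w - mcshane w'| <= L * `|w - w'|.
Proof.
suff half z z' : mcshane z - L * `|z - z'| <= mcshane z'.
  have := half w w'; have := half w' w; rewrite distrC ler_norml.
  by move=> ? ?; apply/andP; split; lra.
apply: le_mcshane => p Pp; rewrite lerBlDr (le_trans (mcshane_le z Pp)) //.
rewrite -addrA lerD2l -mulrDr ler_wpM2l // [X in _ <= X]addrC.
exact: ler_distD.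
Qed.

Lemma mcshane_approx e :
  (forall p q, P p -> P q -> `|v p - v q| < h -> f p - f q <= e) ->
  forall p, P p -> `|f p - mcshane (v p)| <= e.
Proof.
move=> v_sep p Pp; have e_ge0 : 0 <= e by rewrite -(subrr (f p)) v_sep ?subrr ?normr0.
have := mcshane_le (v p) Pp; rewrite subrr normr0 mulr0 addr0 => mcshane_le_f.
rewrite ger0_norm ?subr_ge0 // lerBlDr -lerBlDl; apply: le_mcshane => q Pq.
have [near|far] := ltP `|v p - v q| h.
  have := v_sep _ _ Pp Pq near; have : 0 <= L * `|v p - v q| by rewrite mulr_ge0.
  by move=> ? ?; lra.
have : 2 * B <= L * `|v p - v q| by rewrite -[2 * B](divfK (lt0r_neq0 h_gt0)) ler_wpM2l.
have := f_bounded Pp; have := f_bounded Pq; rewrite !ler_norml.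
by move=> /andP[? ?] /andP[? ?]; lra.
Qed.

End McShaneExtension.

Lemma approx_through_features (V : normedModType R) (X : Type) (P : set X)
    (v : X -> V) (f : X -> R) (B h e : R) :
  0 < h -> (forall p, P p -> `|f p| <= B) ->
  (forall p q, P p -> P q -> `|v p - v q| < h -> f p - f q <= e) ->
  exists2 gamma : V -> R, continuous gamma &
    forall p, P p -> `|f p - gamma (v p)| <= e.
Proof.
move=> h_gt0 f_bounded v_sep.
have [[p0 Pp0]|P0] := pselect (exists p0, P p0); last first.
  by exists (fun=> 0); [exact: cst_continuous | move=> p Pp; case: P0; exists p].
exists (mcshane P v f B h).
  by apply: lipschitz_continuous; exact: mcshane_lipschitz h_gt0 Pp0 f_bounded.
exact: mcshane_approx h_gt0 Pp0 f_bounded _ v_sep.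
Qed.

Lemma rV_norm_ge_coord K (v : 'rV[R]_K) k : `|v ord0 k| <= `|v|.
Proof.
have -> : `|v| = mx_norm v by []; rewrite mx_normrE.
exact: (le_bigmax _ (fun ij : 'I_1 * 'I_K => `|v ij.1 ij.2|) (ord0, k)).
Qed.

Lemma rV_dist_ge_coord K (v w : 'rV[R]_K) k : `|v ord0 k - w ord0 k| <= `|v - w|.
Proof. by rewrite (_ : _ - _ = (v - w) ord0 k) ?rV_norm_ge_coord // !mxE. Qed.

Lemma rV_norm_le K (v : 'rV[R]_K) r :
  0 <= r -> (forall k, `|v ord0 k| <= r) -> `|v| <= r.
Proof.
move=> r_ge0 v_le; have -> : `|v| = mx_norm v by []; rewrite mx_normrE.
by apply: bigmax_le => // -[i k] _ /=; rewrite (ord1 i).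
Qed.

Lemma sup_inf_le (X : Type) (A B : set X) (D : X -> X -> R) r :
  A !=set0 -> (forall a b, 0 <= D a b) ->
  (forall a, A a -> exists2 b, B b & D a b <= r) ->
  sup [set inf [set D a b | b in B] | a in A] <= r.
Proof.
move=> [a0 Aa0] D_ge0 D_le; apply: ge_sup; first by exists (inf [set D a0 b | b in B]), a0.
move=> _ [a Aa <-]; have [b Bb Dab] := D_le a Aa.
apply: le_trans Dab; apply: ge_inf; last by exists b.
by exists 0 => _ [b' _ <-].
Qed.

Section PointClouds.
Variables m T : nat.
Implicit Types (x y a b : 'rV[R]_m) (S : 'I_T -> {fset 'rV[R]_m}).

(* Plain [edist] is MathComp-Analysis's extended distance. *)
Lemma edist_le_norm x y : Defs.edist x y <= m%:R * `|x - y|.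
Proof.
have d_ge0 : 0 <= m%:R * `|x - y| by rewrite mulr_ge0.
rewrite /Defs.edist -(ger0_norm d_ge0) -sqrtr_sqr ler_sqrt ?sqr_ge0 //.
apply: (@le_trans _ _ (\sum_(i < m) `|x - y| ^+ 2)).
  apply: ler_sum => i _; rewrite -real_normK ?num_real // lerXn2r ?nnegrE //.
  exact: rV_dist_ge_coord.
rewrite sumr_const card_ord exprMn -[_ *+ m]mulr_natl ler_wpM2r ?sqr_ge0 //.
have [->|m_gt0] := posnP m; first exact: sqr_ge0.
by rewrite -natrX ler_nat expnS expn1 leq_pmulr.
Qed.

Definition frames_near (r : R) S S' : Prop :=
  forall t a, a \in S t -> exists2 b, b \in S' t & `|a - b| <= r.

Lemma dseq_le S S' r : 0 <= r -> (forall t, exists a, a \in S t) ->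
  frames_near r S S' -> frames_near r S' S -> dseq S S' <= m%:R * r.
Proof.
move=> r_ge0 S_nonempty near_SS' near_S'S.
apply: bigmax_le => [|t _]; first by rewrite mulr_ge0.
have edist_le a b r' : `|a - b| <= r' -> Defs.edist a b <= m%:R * r'.
  by move=> ab_le; rewrite (le_trans (edist_le_norm a b)) // ler_wpM2l.
rewrite /hausdorff ge_max; apply/andP; split.
  apply: sup_inf_le => [||a /near_SS' [b Sb ab_le]]; last by exists b; rewrite ?edist_le.
  - by have [a Sa] := S_nonempty t; exists a.
  - by move=> *; exact: sqrtr_ge0.
apply: (@sup_inf_le _ _ _ (fun b a => Defs.edist a b)) => [||b /near_S'S [a Sa ba_le]].
- by have [a /near_SS' [b Sb _]] := S_nonempty t; exists b.
- by move=> *; exact: sqrtr_ge0.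
by exists a; rewrite ?edist_le // distrC.
Qed.

Lemma pc_seq_frames_nonempty n S : (0 < n)%N -> pc_seq n S ->
  forall t, exists a, a \in S t.
Proof.
by move=> n_gt0 pS t; have [card_St _] := pS t; apply/fset0Pn; rewrite -cardfs_gt0 card_St.
Qed.

Section Grid.
Variable N : nat.
Hypothesis N_gt0 : (0 < N)%N.

Definition grid_point (c : 'rV['I_N.+1]_m) : 'rV[R]_m :=
  \row_i ((c ord0 i)%:R / N%:R).

Definition grid_round x : 'rV['I_N.+1]_m :=
  \row_i inord (Num.truncn (x ord0 i * N%:R)).

Lemma grid_round_dist x : cube x -> `|x - grid_point (grid_round x)| <= N%:R^-1.
Proof.
move=> x_cube; have N_pos : 0 < N%:R :> R by rewrite ltr0n.
apply: rV_norm_le => [|i]; first by rewrite invr_ge0 ltW.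
have /andP[x_ge0 x_le1] := x_cube i.
have xN_ge0 : 0 <= x ord0 i * N%:R by rewrite mulr_ge0 // ltW.
have k_lt : (Num.truncn (x ord0 i * N%:R) < N.+1)%N.
  rewrite ltnS truncn_le_nat (@le_lt_trans _ _ N%:R) ?ltr_nat //.
  by rewrite ler_piMl // ltW.
rewrite !mxE inordK //; set k := Num.truncn _.
have /andP[k_le k_gt] := truncn_itv xN_ge0.
have k_le_x : k%:R / N%:R <= x ord0 i by rewrite ler_pdivrMr.
have x_lt : x ord0 i < k%:R / N%:R + N%:R^-1.
  by rewrite -[X in _ + X]mul1r -mulrDl ltr_pdivlMr // natr1.
rewrite ler_norml; apply/andP; split; lra.
Qed.

Definition grid_pattern S : {ffun 'I_T -> {set 'rV['I_N.+1]_m}} :=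
  [ffun t => finset (fun c => `[< exists2 x, x \in S t & grid_round x = c >])].

Lemma grid_pattern_near n S S' : pc_seq n S -> pc_seq n S' ->
  grid_pattern S = grid_pattern S' -> frames_near (2 * N%:R^-1) S S'.
Proof.
move=> pS pS' same_pattern t a Sa.
have : grid_round a \in grid_pattern S' t.
  by rewrite -same_pattern ffunE inE; apply/asboolP; exists a.
rewrite ffunE inE => /asboolP [b S'b same_round]; exists b => //.
have := grid_round_dist (proj2 (pS t) a Sa).
have := grid_round_dist (proj2 (pS' t) b S'b).
have := ler_distD (grid_point (grid_round a)) a b.
by rewrite same_round (distrC (grid_point _)); lra.
Qed.

Definition feature_index := ('I_T * 'rV['I_N.+1]_m)%type.

Definition grid_feature x (t : 'I_T) : 'rV[R]_#|{: feature_index}| :=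
  \row_k (if (enum_val k).1 == t then - `|x - grid_point (enum_val k).2| else -2).

Lemma grid_feature_lipschitz x y t :
  `|grid_feature x t - grid_feature y t| <= `|x - y|.
Proof.
apply: rV_norm_le => // k; rewrite !mxE; case: ifP => _; last by rewrite subrr normr0.
rewrite opprK addrC (le_trans (ler_dist_dist _ _)) //.
by rewrite opprB addrA subrK distrC.
Qed.

Lemma grid_feature_continuous t : continuous (grid_feature ^~ t).
Proof.
apply: (lipschitz_continuous (C := 1)) => x y.
by rewrite mul1r grid_feature_lipschitz.
Qed.

Lemma MAX_grid_feature_ge S t c a : a \in S t ->
  - `|a - grid_point c| <= MAX grid_feature S ord0 (enum_rank (t, c)).
Proof.
move=> Sa; rewrite mxE; apply: ub_le_sup.
  by exists 0 => _ [t' [x [_ ->]]]; rewrite mxE; case: ifP => _; rewrite ?oppr_le0.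
by exists t, a; split => //; rewrite mxE enum_rankK /= eqxx.
Qed.

Lemma MAX_grid_feature_lt S t c rho : (exists a, a \in S t) -> rho <= 2 ->
  - rho < MAX grid_feature S ord0 (enum_rank (t, c)) ->
  exists2 b, b \in S t & `|b - grid_point c| < rho.
Proof.
move=> [a Sa] rho_le2; rewrite ltNge; apply: contraNP => far; rewrite mxE.
apply: ge_sup; first by exists (grid_feature a t ord0 (enum_rank (t, c))), t, a.
move=> _ [t' [x [St'x ->]]]; rewrite mxE enum_rankK /=.
case: eqP => [t_t'|_]; last by rewrite lerN2.
rewrite lerN2 leNgt; apply/negP => x_near; apply: far; exists x => //.
by rewrite t_t'.
Qed.

Lemma MAX_grid_feature_near n S S' : pc_seq n S -> (forall t, exists b, b \in S' t) ->
  `|MAX grid_feature S - MAX grid_feature S'| < N%:R^-1 ->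
  frames_near (3 * N%:R^-1) S S'.
Proof.
move=> pS S'_nonempty MAX_near t a Sa.
set c := grid_round a; set k := enum_rank (t, c).
have N_inv_le1 : N%:R^-1 <= 1 :> R by rewrite invf_le1 ?ler1n ?ltr0n.
have a_c := grid_round_dist (proj2 (pS t) a Sa).
have MAX_S_k := MAX_grid_feature_ge c Sa.
have MAX_k := le_lt_trans (rV_dist_ge_coord _ _ k) MAX_near.
have [b S'b b_c] : exists2 b, b \in S' t & `|b - grid_point c| < 2 * N%:R^-1.
  apply: MAX_grid_feature_lt => //; first by lra.
  by move: MAX_k; rewrite ltr_norml => /andP[? ?]; lra.
exists b => //; have := ler_distD (grid_point c) a b.
by rewrite (distrC (grid_point c)); lra.
Qed.

Lemma dseq_le_of_same_grid_pattern n S S' : (0 < n)%N -> pc_seq n S -> pc_seq n S' ->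
  grid_pattern S = grid_pattern S' -> dseq S S' <= m%:R * (2 * N%:R^-1).
Proof.
move=> n_gt0 pS pS' same_pattern.
apply: dseq_le; rewrite ?mulr_ge0 ?invr_ge0 //; first exact: pc_seq_frames_nonempty pS.
  exact: grid_pattern_near.
exact: grid_pattern_near pS' pS _.
Qed.

Lemma dseq_le_of_MAX_grid_feature_near n S S' :
  (0 < n)%N -> pc_seq n S -> pc_seq n S' ->
  `|MAX grid_feature S - MAX grid_feature S'| < N%:R^-1 ->
  dseq S S' <= m%:R * (3 * N%:R^-1).
Proof.
move=> n_gt0 pS pS' MAX_near.
have S_nonempty := pc_seq_frames_nonempty n_gt0 pS.
have S'_nonempty := pc_seq_frames_nonempty n_gt0 pS'.
apply: dseq_le; rewrite ?mulr_ge0 ?invr_ge0 //.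
  exact: MAX_grid_feature_near MAX_near.
by apply: MAX_grid_feature_near; rewrite // distrC.
Qed.

End Grid.
End PointClouds.
End PointCloudApproximation.

Unset Implicit Arguments.

Theorem theorem1 (R : realType) (m n T : nat)
  (hm : (0 < m)%N) (hn : (0 < n)%N) (hT : (0 < T)%N)
  (f : ('I_T -> {fset 'rV[R]_m}) -> R)
  (hf : forall eps : R, 0 < eps -> exists2 delta : R, 0 < delta &
     forall S S', pc_seq n S -> pc_seq n S' -> dseq S S' < delta ->
       `|f S - f S'| < eps) :
  forall eps : R, 0 < eps ->
  exists K : nat, (0 < K)%N /\
  exists (zeta : 'rV[R]_m -> 'I_T -> 'rV[R]_K) (gamma : 'rV[R]_K -> R),
    (forall t : 'I_T, {within @cube R m, continuous (fun x => zeta x t)}) /\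
    continuous gamma /\
    forall S, pc_seq n S -> `|f S - gamma (MAX zeta S)| < eps.
Proof.
move=> eps eps_gt0.
have [B f_bounded] : exists B, forall S, pc_seq n S -> `|f S| <= B.
  have [d d_gt0 f_unif] := hf 1 ltr01.
  have [N N_gt0 N_small] := exists_nat_inv_lt (m%:R * 2) d_gt0.
  apply: (bounded_of_finite_fibers (c := grid_pattern N)) => S S' pS pS' same_pattern.
  apply/ltW/f_unif/(le_lt_trans _ N_small) => //.
  by rewrite -mulrA (dseq_le_of_same_grid_pattern N_gt0 hn).
have eps2_gt0 : 0 < eps / 2 by rewrite divr_gt0.
have [d d_gt0 f_unif] := hf (eps / 2) eps2_gt0.
have [N N_gt0 N_small] := exists_nat_inv_lt (m%:R * 3) d_gt0.
have N_inv_gt0 : 0 < N%:R^-1 :> R by rewrite invr_gt0 ltr0n.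
have MAX_separates S S' : pc_seq n S -> pc_seq n S' ->
    `|MAX (grid_feature N) S - MAX (grid_feature N) S'| < N%:R^-1 ->
    f S - f S' <= eps / 2.
  move=> pS pS' MAX_near; apply/ltW/(le_lt_trans (ler_norm _))/f_unif => //.
  by rewrite (le_lt_trans _ N_small) // -mulrA (dseq_le_of_MAX_grid_feature_near N_gt0 hn).
have [gamma gamma_cont gamma_approx] :=
  approx_through_features N_inv_gt0 f_bounded MAX_separates.
exists #|{: feature_index m T N}|; split; first by apply/card_gt0P; exists (Ordinal hT, 0).
exists (grid_feature N), gamma; split; [|split => // S pS].
  by move=> t; apply: continuous_subspaceT; exact: grid_feature_continuous.
by rewrite (le_lt_trans (gamma_approx S pS)) // ltr_pdivrMr // ltr_pMr // ltr1n.
Qed.
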